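(* Let $\eta > 0$, let $\mathrm{smax}_\eta(z) = \eta \ln\left(\sum_{j=1}^m e^{z_j/\eta}\right)$ for $z \in \mathbb{R}^m_+$, and let $\nabla \mathrm{smax}_\eta$ denote its gradient. Let $A \in \mathbb{R}^{m \times n}_+$ and $x \in \mathbb{R}^n_+$ with $\|A x\|_\infty \le 1$. Let $M$ be an $n\times n$ diagonal matrix with $M \preceq I$, let $d = \eta M x$, and suppose $\frac{1}{\eta}\|A d\|_\infty \le 1/2$. Then $$\mathrm{smax}_\eta(A(x+d)) \le \mathrm{smax}_\eta(Ax) + \eta \left\langle A^\top \nabla \mathrm{smax}_\eta(Ax),\; M x + M^2 x \right\rangle.$$ Furthermore, given $\lambda \in \mathbb{R}_+$ and $c \in \mathbb{R}^n_+$, if $M$ is the diagonal matrix with $$M_{ii} = \left(1 - \lambda \cdot \frac{(A^\top \nabla \mathrm{smax}_\eta(Ax))_i}{c_i}\right) \vee 0,$$ then, with $d = \eta M x$, $$\frac{\mathrm{smax}_\eta(A(x+d)) - \mathrm{smax}_\eta(Ax)}{\langle c, d\rangle} \le \frac{1}{\lambda}.$$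
   Context: $\mathrm{smax}_\eta$ is the softmax function with parameter $\eta$; its gradient has entries $\nabla_j \mathrm{smax}_\eta(z) = e^{z_j/\eta}/\sum_{\ell} e^{z_\ell/\eta}$. $a \vee b$ denotes $\max\{a,b\}$. $M \preceq I$ means $I - M$ is positive semidefinite. This corollary follows from the following lemma: for $x, d \in \mathbb{R}^n_+$ and $A \in \mathbb{R}^{m\times n}_+$ with $\frac{1}{\eta}\|Ad\|_\infty \le 1/2$, $\mathrm{smax}_\eta(A(x+d)) \le \mathrm{smax}_\eta(Ax) + \langle A^\top \nabla \mathrm{smax}_\eta(Ax),\, d + \|Ax\|_\infty \cdot \frac{1}{\eta} \cdot D(x)^\dagger (d \circ d)\rangle$, where $D(x)^\dagger$ is the diagonal matrix with entries $1/x_i$ for $x_i \ne 0$ and $0$ otherwise, and $\circ$ is the coordinatewise product. *)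

From mathcomp Require Import all_boot all_order all_algebra.
From mathcomp Require Import reals.
From mathcomp Require Import sequences exp.
Set Implicit Arguments. Unset Strict Implicit. Unset Printing Implicit Defensive.
Import Order.TTheory GRing.Theory Num.Theory.
Local Open Scope ring_scope.

Section Defs.
Context {R : realType}.

Definition smax {m : nat} (eta : R) (z : 'cV[R]_m) : R :=
  eta * ln (\sum_(j < m) expR (z j 0 / eta)).

Definition grad_smax {m : nat} (eta : R) (z : 'cV[R]_m) : 'cV[R]_m :=
  \col_(j < m) (expR (z j 0 / eta) / \sum_(l < m) expR (z l 0 / eta)).

Definition normInf {m : nat} (v : 'cV[R]_m) : R :=
  \big[Num.max/0]_(i < m) `|v i 0|.

Definition dotv {n : nat} (u v : 'cV[R]_n) : R := \sum_(i < n) u i 0 * v i 0.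

Definition loewner_le {n : nat} (M N : 'M[R]_n) : Prop :=
  forall v : 'cV[R]_n, 0 <= (v^T *m (N - M) *m v) 0 0.

End Defs.

From mathcomp Require Import all_boot all_order all_algebra.
From mathcomp Require Import reals.
From mathcomp Require Import sequences exp.
From mathcomp Require Import ring lra.
Import Order.TTheory GRing.Theory Num.Theory.
Local Open Scope ring_scope.

(* Putting u := A M x,
   the exponents of smax move by u, and ln y <= y - 1 bounds the increase of
   smax by eta <grad smax(Ax), exp(u) - 1>.  Since u <= 1/2, exp(u) - 1 <= u + u^2,
   and weighted Cauchy-Schwarz together with (Ax)_j <= 1 gives u_j^2 <= (A M^2 x)_j.
   For the second bound, with q := M_ii > 0 one has g_i = (1 - q) c_i / lam, so
   g_i (q + q^2) x_i = (1 - q^2) q c_i x_i / lam <= c_i (M x)_i / lam. *)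

Lemma sqr_wsum_le (R : realDomainType) (I : finType) (w v : I -> R) :
  (forall i, 0 <= w i) ->
  (\sum_i w i * v i) ^+ 2 <= (\sum_i w i) * (\sum_i w i * v i ^+ 2).
Proof.
move=> w_ge0.
have pair i j : 2 * (w i * v i * (w j * v j))
    <= w i * (w j * v j ^+ 2) + w j * (w i * v i ^+ 2).
  rewrite -subr_ge0 (_ : _ - _ = w i * w j * (v i - v j) ^+ 2); last by ring.
  by rewrite mulr_ge0 ?sqr_ge0 ?mulr_ge0.
have sym : \sum_i \sum_j w i * (w j * v j ^+ 2)
         = \sum_i \sum_j w j * (w i * v i ^+ 2) by rewrite exchange_big.
rewrite expr2 !big_distrlr /= -(ler_pM2l (ltr0Sn R 1)) [X in _ <= X]mulr_natl.
rewrite [X in _ <= X]mulr2n {2}sym -big_split mulr_sumr; apply: ler_sum => i _.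
by rewrite -big_split mulr_sumr; apply: ler_sum => j _.
Qed.

(* At b = 0 this holds only because a / 0 = 0. *)
Lemma ler_wpdivrMl (R : realFieldType) (a b k : R) :
  0 <= k -> 0 <= b -> a <= k * b -> a / b <= k.
Proof.
move=> k_ge0; rewrite le_eqVlt => /predU1P[<- _|b_gt0]; first by rewrite invr0 mulr0.
by rewrite ler_pdivrMr.
Qed.

Section Exp.
Context {R : realType}.

Lemma expR_le_invr1B (s : R) : s < 1 -> expR s <= (1 - s)^-1.
Proof.
move=> s_lt1; rewrite -div1r ler_pdivlMr ?subr_gt0 //.
rewrite -[X in _ <= X](mulfV (lt0r_neq0 (expR_gt0 s))) ler_pM2l ?expR_gt0 //.
by rewrite -expRN; have := expR_ge1Dx (- s); lra.
Qed.

Lemma expR_le_1DxDsqr [t : R] : t <= 1 / 2 -> expR t <= 1 + t + t ^+ 2.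
Proof.
move=> t_le; have -> : t = t / 4 * 4%:R by field.
rewrite expRM_natr.
apply: (@le_trans _ _ (((1 - t / 4)^-1) ^+ 4)).
  by rewrite lerXn2r ?nnegrE ?expR_ge0 ?invr_ge0 ?expR_le_invr1B //; lra.
rewrite exprVn -div1r ler_pdivrMr; last by rewrite exprn_gt0 // subr_gt0; lra.
have q_ge0 : 0 <= 3/8 - 11/16 * t + 81/256 * t ^+ 2 - 15/256 * t ^+ 3 + t ^+ 4 / 256.
  by nra.
have -> : (1 + t / 4 * 4%:R + (t / 4 * 4%:R) ^+ 2) * (1 - t / 4) ^+ 4
        = 1 + t ^+ 2 * (3/8 - 11/16 * t + 81/256 * t ^+ 2 - 15/256 * t ^+ 3 + t ^+ 4 / 256).
  by field.
by rewrite lerDl mulr_ge0 ?sqr_ge0.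
Qed.

Lemma ln_le_subr1 (y : R) : 0 < y -> ln y <= y - 1.
Proof.
by move=> y_gt0; have := @le_ln1Dx R (y - 1); rewrite subrKC; apply; lra.
Qed.

End Exp.

Section Matrices.
Context {R : realType}.

Lemma ler_normInf {m : nat} (v : 'cV[R]_m) i : `|v i 0| <= normInf v.
Proof. exact: le_bigmax. Qed.

Lemma diag_mulmxE (n p : nat) (M : 'M[R]_n) (B : 'M[R]_(n, p)) i j :
  is_diag_mx M -> (M *m B) i j = M i i * B i j.
Proof.
move=> /is_diag_mxP M_diag; rewrite mxE (bigD1 i) //= big1 ?addr0 // => k k_neq.
by rewrite M_diag ?mul0r // eq_sym.
Qed.

Lemma dotv_trmx (m n : nat) (A : 'M[R]_(m, n)) u v :
  dotv (A^T *m u) v = dotv u (A *m v).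
Proof.
rewrite /dotv; under eq_bigr do rewrite mxE mulr_suml.
rewrite exchange_big; apply: eq_bigr => j _; rewrite mxE mulr_sumr.
by apply: eq_bigr => i _; rewrite mxE mulrCA mulrA.
Qed.

Lemma dotvZr (n : nat) (a : R) (u v : 'cV[R]_n) : dotv u (a *: v) = a * dotv u v.
Proof. by rewrite /dotv mulr_sumr; apply: eq_bigr => i _; rewrite mxE mulrCA. Qed.

Lemma ler_dotv (n : nat) (u v w : 'cV[R]_n) :
  (forall i, 0 <= u i 0) -> (forall i, v i 0 <= w i 0) -> dotv u v <= dotv u w.
Proof. by move=> u_ge0 vw; apply: ler_sum => i _; rewrite ler_wpM2l. Qed.

Lemma mulmx_diag_sqr_le {m n : nat} {A : 'M[R]_(m, n)} {M : 'M[R]_n} {x : 'cV[R]_n} j :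
  (forall i j, 0 <= A i j) -> (forall i, 0 <= x i 0) -> is_diag_mx M ->
  (A *m x) j 0 <= 1 ->
  ((A *m (M *m x)) j 0) ^+ 2 <= (A *m (M *m M *m x)) j 0.
Proof.
move=> A_ge0 x_ge0 M_diag Ax_le1.
have MxE i : (M *m x) i 0 = M i i * x i 0 by rewrite diag_mulmxE.
have MMxE i : (M *m M *m x) i 0 = M i i ^+ 2 * x i 0.
  by rewrite -mulmxA !diag_mulmxE // mulrA.
have MMx_ge0 : 0 <= (A *m (M *m M *m x)) j 0.
  rewrite mxE sumr_ge0 // => i _; rewrite MMxE.
  exact: mulr_ge0 (A_ge0 j i) (mulr_ge0 (sqr_ge0 _) (x_ge0 i)).
apply: le_trans (ler_piMl MMx_ge0 Ax_le1).
have := @sqr_wsum_le _ _ _ (fun i => M i i) (fun i => mulr_ge0 (A_ge0 j i) (x_ge0 i)).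
rewrite !mxE; congr (_ ^+ 2 <= _ * _); apply: eq_bigr => i _.
- by rewrite MxE; ring.
- by rewrite MMxE; ring.
Qed.

End Matrices.

Section Softmax.
Context {R : realType}.

Lemma grad_smax_ge0 (m : nat) (eta : R) (z : 'cV[R]_m) i : 0 <= grad_smax eta z i 0.
Proof. by rewrite mxE divr_ge0 ?expR_ge0 ?sumr_ge0 // => j _; rewrite expR_ge0. Qed.

Lemma smax_shift_le {m : nat} [eta : R] (z w : 'cV[R]_m) : 0 < eta ->
  smax eta (z + eta *: w)
    <= smax eta z + eta * dotv (grad_smax eta z) (map_mx (fun t => expR t - 1) w).
Proof.
move=> eta_gt0; case: m z w => [|m] z w.
  by rewrite /smax /dotv !big_ord0 ln0 // !mulr0 addr0.
set e := fun j => expR (z j 0 / eta); set S := \sum_j e j.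
set S' := \sum_j e j * expR (w j 0).
have S_gt0 : 0 < S.
  by rewrite /S (bigD1 ord0) //= ltr_pwDl ?expR_gt0 ?sumr_ge0 // => j _; rewrite expR_ge0.
have S'_gt0 : 0 < S'.
  rewrite /S' (bigD1 ord0) //= ltr_pwDl ?mulr_gt0 ?expR_gt0 ?sumr_ge0 // => j _.
  by rewrite mulr_ge0 ?expR_ge0.
have shiftE : \sum_j expR ((z + eta *: w) j 0 / eta) = S'.
  apply: eq_bigr => j _; rewrite -expRD !mxE; congr expR.
  by field; rewrite lt0r_neq0.
have dotE : dotv (grad_smax eta z) (map_mx (fun t => expR t - 1) w) = S' / S - 1.
  rewrite -[1 in RHS](mulfV (lt0r_neq0 S_gt0)) -mulrBl -sumrB mulr_suml.
  by apply: eq_bigr => j _; rewrite !mxE /S /e; ring.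
rewrite /smax shiftE dotE -lerBlDl -mulrBr ler_pM2l //.
by rewrite -ln_div ?posrE // ln_le_subr1 ?divr_gt0.
Qed.

Lemma smax_damped_step_le {m n : nat} {eta : R} {A : 'M[R]_(m, n)} {x : 'cV[R]_n}
    {M : 'M[R]_n} :
  0 < eta -> (forall i j, 0 <= A i j) -> (forall i, 0 <= x i 0) ->
  normInf (A *m x) <= 1 -> is_diag_mx M ->
  eta^-1 * normInf (A *m (eta *: (M *m x))) <= 1 / 2 ->
  smax eta (A *m (x + eta *: (M *m x)))
    <= smax eta (A *m x)
       + eta * dotv (A^T *m grad_smax eta (A *m x)) (M *m x + M *m M *m x).
Proof.
move=> eta_gt0 A_ge0 x_ge0 Ax_le1 M_diag Ad_le.
set u := A *m (M *m x).
have u_le j : u j 0 <= 1 / 2.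
  apply: le_trans (ler_norm _) (le_trans _ Ad_le).
  rewrite -scalemxAr mulrC ler_pdivlMr // mulrC.
  by have := ler_normInf (eta *: u) j; rewrite mxE normrM gtr0_norm.
have step j : expR (u j 0) - 1 <= (A *m (M *m x + M *m M *m x)) j 0.
  have := mulmx_diag_sqr_le j A_ge0 x_ge0 M_diag
            (le_trans (ler_norm _) (le_trans (ler_normInf _ j) Ax_le1)).
  have := expR_le_1DxDsqr (u_le j).
  by rewrite mulmxDr -/u [(u + _) _ _]mxE; lra.
rewrite mulmxDr -scalemxAr; apply: le_trans (smax_shift_le (A *m x) u eta_gt0) _.
rewrite lerD2l ler_pM2l // dotv_trmx; apply: ler_dotv => [i|j].
  exact: grad_smax_ge0.
by rewrite mxE; apply: step.
Qed.

End Softmax.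

Section Damping.
Context {R : realFieldType}.

Definition damping (lam g c : R) : R :=
  Num.max (1 - lam * (g / c)) 0.

Lemma damping_ge0 (lam g c : R) : 0 <= damping lam g c.
Proof. by rewrite /damping le_max lexx orbT. Qed.

Lemma damped_coord_le (lam g c x : R) :
  0 < lam -> 0 < c -> 0 <= x ->
  g * (damping lam g c * x + damping lam g c * (damping lam g c * x))
    <= lam^-1 * (c * (damping lam g c * x)).
Proof.
rewrite /damping => lam_gt0 c_gt0 x_ge0.
have [q_le0|q_gt0] := lerP (1 - lam * (g / c)) 0.
  by rewrite !(mul0r, mulr0, addr0).
set q := 1 - lam * (g / c) in q_gt0 *.
have -> : g * (q * x + q * (q * x)) = lam^-1 * (c * (q * x)) * (1 - q ^+ 2).
  by rewrite /q; field; rewrite !lt0r_neq0.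
apply: ler_piMr; last by rewrite gerBl sqr_ge0.
by rewrite !mulr_ge0 ?invr_ge0 // ltW.
Qed.

End Damping.

Theorem corollary2p3 (R : realType) (m n : nat) (eta : R)
    (A : 'M[R]_(m, n)) (x : 'cV[R]_n) :
  0 < eta ->
  (forall i j, 0 <= A i j) ->
  (forall i, 0 <= x i 0) ->
  normInf (A *m x) <= 1 ->
  (forall M : 'M[R]_n,
      is_diag_mx M -> loewner_le M 1%:M ->
      let d := eta *: (M *m x) in
      eta^-1 * normInf (A *m d) <= 1 / 2 ->
      smax eta (A *m (x + d)) <=
        smax eta (A *m x)
        + eta * dotv (A^T *m grad_smax eta (A *m x)) (M *m x + M *m M *m x))
  /\
  (forall (lam : R) (c : 'cV[R]_n),
      0 < lam -> (forall i, 0 < c i 0) ->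
      let g := A^T *m grad_smax eta (A *m x) in
      let M := diag_mx (\row_i Num.max (1 - lam * (g i 0 / c i 0)) 0) in
      let d := eta *: (M *m x) in
      eta^-1 * normInf (A *m d) <= 1 / 2 ->
      (smax eta (A *m (x + d)) - smax eta (A *m x)) / dotv c d <= lam^-1).
Proof.
move=> eta_gt0 A_ge0 x_ge0 Ax_le1; split=> [M M_diag _ d|lam c lam_gt0 c_gt0 g M d].
  exact: smax_damped_step_le.
move=> /(smax_damped_step_le eta_gt0 A_ge0 x_ge0 Ax_le1 (diag_mx_is_diag _)) step.
have ME i : M i i = damping lam (g i 0) (c i 0) by rewrite !mxE eqxx mulr1n.
have cMx_ge0 : 0 <= dotv c (M *m x).
  apply: sumr_ge0 => i _; rewrite diag_mulmxE ?diag_mx_is_diag // ME.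
  exact: mulr_ge0 (ltW (c_gt0 i)) (mulr_ge0 (damping_ge0 _ _ _) (x_ge0 i)).
have gain : dotv g (M *m x + M *m M *m x) <= lam^-1 * dotv c (M *m x).
  rewrite /dotv mulr_sumr; apply: ler_sum => i _.
  rewrite [X in _ * X <= _]mxE -mulmxA !diag_mulmxE ?diag_mx_is_diag // ME.
  exact: damped_coord_le.
rewrite /d dotvZr; apply: ler_wpdivrMl.
- by rewrite invr_ge0 ltW.
- by rewrite mulr_ge0 // ltW.
apply: le_trans (_ : _ <= eta * (lam^-1 * dotv c (M *m x))) _; last by rewrite mulrCA.
by rewrite lerBlDl; apply: le_trans step _; rewrite lerD2l ler_pM2l.
Qed.
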